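(* Let $(X,d,\preccurlyeq)$ be a preordered $s$-regular $b$-metric space, let $x_0\in X$, and let $\mathcal{F}=\{f_\alpha\}_{\alpha\in\mathcal{I}}$ ($\mathcal I$ nonempty) be a concordantly isotone family of self mappings of $X$ with $f_\alpha(x_0)\succcurlyeq x_0$ for all $\alpha\in\mathcal{I}$. Suppose that for every chain $C\in\mathcal{C}^*_1(x_0,\mathcal{F},\preccurlyeq)$ there exists $w\in X$ which is a common upper bound of the chains $f_\alpha(C)$, $\alpha\in\mathcal{I}$, and there exist $z\in X$ and $\beta\in\mathcal{I}$ such that for all $\alpha\in\mathcal{I}$ and all $i\in\mathbb{N}$, $f_\alpha(w)\succcurlyeq w\succcurlyeq f_\beta^i(z)$, and $d(f_\alpha^i(w),f_\beta^i(z))\to 0$ as $i\to\infty$ for all $\alpha\in\mathcal I$. Then the set $\mathrm{ComFix}(\mathcal{F})\cap O^*_X(x_0)$ is nonempty and contains a maximal element.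
   Context: A $b$-metric space with coefficient $s\ge 1$ is a nonempty set $X$ with $d:X\times X\to[0,\infty)$ such that for all $x,y,z$: $d(x,y)=0$ iff $x=y$; $d(x,y)=d(y,x)$; $d(x,y)\le s[d(x,z)+d(z,y)]$. A preorder is a reflexive transitive relation $\preccurlyeq$; $x\succcurlyeq y$ means $y\preccurlyeq x$; $x\prec y$ means $x\preccurlyeq y$ and $x\ne y$. A preordered $s$-regular $b$-metric space $(X,d,\preccurlyeq)$ is a $b$-metric space with coefficient $s$ with a preorder such that $x\preccurlyeq y\preccurlyeq z$ implies $\max\{d(x,y),d(y,z)\}\le s^2d(x,z)$. A chain is a subset any two elements of which are comparable. $f^i$ is the $i$-th iterate. A family $\mathcal{F}=\{f_\alpha\}_{\alpha\in\mathcal I}$ of self maps is concordantly isotone if for all $x,y\in X$, $x\prec y$ implies $f_\alpha(x)\preccurlyeq f_\beta(y)$ for all $\alpha,\beta\in\mathcal{I}$. $O^*_X(x_0)=\{x:x\succcurlyeq x_0\}$. $\mathcal{C}^*_1(\mathcal F,\preccurlyeq)$ is the set of chains $C\subset\bigcup_{\alpha}f_\alpha(X)$ such that $f_\alpha(x)\succcurlyeq x$ for all $x\in C,\alpha\in\mathcal I$, and for all $x,y\in C$, $x\prec y$ implies $f_\alpha(x)\preccurlyeq y$ for all $\alpha$. $\mathcal{C}^*_1(x_0,\mathcal F,\preccurlyeq)=\{C\in\mathcal C^*_1(\mathcal F,\preccurlyeq): C\subset O^*_X(x_0)\cap\bigcup_\alpha f_\alpha(O^*_X(x_0))\}$. $\mathrm{ComFix}(\mathcal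 F)=\{x: f_\alpha(x)=x\ \forall\alpha\}$. A common upper bound of the sets $f_\alpha(C)$ is $w$ with $f_\alpha(x)\preccurlyeq w$ for all $x\in C$, $\alpha\in\mathcal I$. A maximal element of $A$ is $w\in A$ with no $u\in A$ such that $w\prec u$. *)

From Stdlib Require Import Reals.
Open Scope R_scope.

Definition b_metric {X : Type} (d : X -> X -> R) (s : R) : Prop :=
  1 <= s /\
  (forall x y, 0 <= d x y) /\
  (forall x y, d x y = 0 <-> x = y) /\
  (forall x y, d x y = d y x) /\
  (forall x y z, d x y <= s * (d x z + d z y)).

Definition preorder_rel {X : Type} (le : X -> X -> Prop) : Prop :=
  (forall x, le x x) /\ (forall x y z, le x y -> le y z -> le x z).

Definition sprec {X : Type} (le : X -> X -> Prop) (x y : X) : Prop :=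
  le x y /\ x <> y.

Definition preordered_s_regular_b_metric {X : Type}
    (d : X -> X -> R) (s : R) (le : X -> X -> Prop) : Prop :=
  b_metric d s /\ preorder_rel le /\
  (forall x y z, le x y -> le y z -> Rmax (d x y) (d y z) <= s ^ 2 * d x z).

Definition is_chain {X : Type} (le : X -> X -> Prop) (C : X -> Prop) : Prop :=
  forall x y, C x -> C y -> le x y \/ le y x.

Definition concordantly_isotone {X I : Type} (le : X -> X -> Prop)
    (f : I -> X -> X) : Prop :=
  forall x y, sprec le x y -> forall a b, le (f a x) (f b y).

Definition Ostar {X : Type} (le : X -> X -> Prop) (x0 : X) : X -> Prop :=
  fun x => le x0 x.

Definition Cstar1 {X I : Type} (le : X -> X -> Prop) (f : I -> X -> X)
    (C : X -> Prop) : Prop :=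
  is_chain le C /\
  (forall x, C x -> exists a y, x = f a y) /\
  (forall x a, C x -> le x (f a x)) /\
  (forall x y, C x -> C y -> sprec le x y -> forall a, le (f a x) y).

Definition Cstar1_at {X I : Type} (le : X -> X -> Prop) (f : I -> X -> X)
    (x0 : X) (C : X -> Prop) : Prop :=
  Cstar1 le f C /\
  (forall x, C x -> Ostar le x0 x /\ exists a y, Ostar le x0 y /\ x = f a y).

Definition ComFix {X I : Type} (f : I -> X -> X) (x : X) : Prop :=
  forall a, f a x = x.

Definition common_upper_bound {X I : Type} (le : X -> X -> Prop)
    (f : I -> X -> X) (C : X -> Prop) (w : X) : Prop :=
  forall a x, C x -> le (f a x) w.

Definition maximal_in {X : Type} (le : X -> X -> Prop) (A : X -> Prop) (w : X)
  : Prop := A w /\ ~ (exists u, A u /\ sprec le w u).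

From Stdlib Require Import Reals Lra Lia Classical.
From mathcomp Require boolp classical_sets.
Open Scope R_scope.

(* The s-regularity inequality, applied twice to the sandwich
   f_b^i z <= w <= f_a w <= f_a^i w, bounds d(w, f_a w) by s^4 d(f_b^i z, f_a^i w),
   which tends to 0; so every bound w provided by the hypothesis is a common
   fixed point.  For the singleton chain {f_a x0} this gives a common fixed
   point above x0.  Every chain of common fixed points above x0 lies in
   C*_1(x0, F), and its bound w is a common fixed point dominating it; since
   s-regularity also makes the preorder antisymmetric, Zorn's lemma yields a
   maximal common fixed point. *)

Lemma le_0_of_dominated_by_null (a K : R) (x : nat -> R) :
  (forall n, a <= K * x n) -> Un_cv x 0 -> a <= 0.
Proof.
intros Hdom Hx.
assert (Hcst : forall c : R, Un_cv (fun _ => c) c).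
{ intros c e He; exists 0%nat; intros n _.
  unfold Rdist; rewrite Rminus_diag, Rabs_R0; exact He. }
rewrite <- (Rmult_0_r K).
exact (Rle_cv_lim Hdom (Hcst a) (CV_mult _ _ _ _ (Hcst K) Hx)).
Qed.

Lemma zorn_maximal_in (T : Type) (le : T -> T -> Prop) (P : T -> Prop) (p : T) :
  preorder_rel le -> (forall x y, le x y -> le y x -> x = y) -> P p ->
  (forall A : T -> Prop, (exists x, A x) -> (forall x, A x -> P x) ->
     is_chain le A -> exists t, P t /\ forall x, A x -> le x t) ->
  exists m, maximal_in le P m.
Proof.
intros [Hrefl Htrans] Hanti Pp Hchain.
set (S := {x : T | P x}).
set (leS := fun a b : S => boolp.asbool (le (proj1_sig a) (proj1_sig b))).
assert (HleS : forall a b : S, leS a b = true <-> le (proj1_sig a) (proj1_sig b)).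
{ intros a b; split; [apply boolp.asboolW | apply boolp.asboolT]. }
destruct (@classical_sets.Zorn S leS) as [[m Pm] Hm].
- intros a; apply HleS, Hrefl.
- intros a b c Hab Hbc; apply HleS.
  apply (Htrans _ (proj1_sig b)); apply HleS; assumption.
- intros [x Px] [y Py] Hxy Hyx.
  apply HleS in Hxy, Hyx; simpl in Hxy, Hyx.
  assert (E := Hanti x y Hxy Hyx); subst y.
  f_equal; apply proof_irrelevance.
- intros A HA.
  set (A' := fun x => exists Px : P x, A (exist _ x Px)).
  destruct (classic (exists x, A' x)) as [HA'|HA'].
  + destruct (Hchain A' HA') as [t [Pt Ht]].
    * intros x [Px _]; exact Px.
    * intros x y [Px Ax] [Py Ay].
      destruct (HA _ _ Ax Ay) as [H | H]; apply HleS in H; auto.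
    * exists (exist _ t Pt); intros [x Px] Ax; apply HleS, Ht; exists Px; exact Ax.
  + exists (exist _ p Pp); intros [x Px] Ax.
    exfalso; apply HA'; exists x, Px; exact Ax.
- exists m; split; [exact Pm |].
  intros [u [Pu [Hmu Hne]]]; apply Hne.
  assert (Hum := Hm (exist _ u Pu) (proj2 (HleS (exist _ m Pm) (exist _ u Pu)) Hmu)).
  symmetry; exact (f_equal (@proj1_sig _ _) Hum).
Qed.

Section RegularBMetric.

Variables (X : Type) (d : X -> X -> R) (s : R) (le : X -> X -> Prop).
Hypothesis Hsp : preordered_s_regular_b_metric d s le.

Lemma regular_antisym (x y : X) : le x y -> le y x -> x = y.
Proof.
destruct Hsp as [[_ [Hpos [Hd0 _]]] [_ Hreg]].
intros Hxy Hyx; apply Hd0.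
assert (Hxx : d x x = 0) by (apply Hd0; reflexivity).
pose proof (Hreg x y x Hxy Hyx) as H; rewrite Hxx, Rmult_0_r in H.
pose proof (Rmax_l (d x y) (d y x)); pose proof (Hpos x y); lra.
Qed.

Lemma regular_dist_sandwich (u w y v : X) :
  le u w -> le w y -> le y v -> d w y <= s ^ 2 * (s ^ 2 * d u v).
Proof.
destruct Hsp as [[Hs1 _] [[_ Htrans] Hreg]].
intros Huw Hwy Hyv.
assert (Hwv : d w v <= s ^ 2 * d u v).
{ eapply Rle_trans; [apply Rmax_r | apply Hreg]; eauto. }
assert (Hwy' : d w y <= s ^ 2 * d w v).
{ eapply Rle_trans; [apply Rmax_l | apply Hreg]; eauto. }
assert (0 <= s ^ 2) by (apply pow_le; lra).
eapply Rle_trans; [exact Hwy' | apply Rmult_le_compat_l; assumption].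
Qed.

Lemma iter_orbit_le (g : X -> X) (w : X) :
  (forall x y, le x y -> le (g x) (g y)) -> le w (g w) ->
  forall i j, (i <= j)%nat -> le (Nat.iter i g w) (Nat.iter j g w).
Proof.
destruct Hsp as [_ [[Hrefl Htrans] _]].
intros Hg Hw.
assert (Hstep : forall k, le (Nat.iter k g w) (Nat.iter (S k) g w)).
{ induction k as [|k IH]; [exact Hw | exact (Hg _ _ IH)]. }
intros i j Hij; induction Hij as [|j _ IH]; [apply Hrefl |].
exact (Htrans _ _ _ IH (Hstep j)).
Qed.

Lemma fixpoint_of_squeezed_orbit (g : X -> X) (w : X) (u : nat -> X) :
  (forall x y, le x y -> le (g x) (g y)) -> le w (g w) ->
  (forall i, le (u i) w) ->
  Un_cv (fun i => d (Nat.iter i g w) (u i)) 0 -> g w = w.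
Proof.
destruct Hsp as [[_ [Hpos [Hd0 [Hsym _]]]] _].
intros Hg Hw Hu Hcv.
set (v := fun i => Nat.iter (i + 1) g w).
assert (Hbound : forall i, d w (g w) <= s ^ 2 * s ^ 2 * d (v i) (u (i + 1)%nat)).
{ intros i; rewrite Rmult_assoc, (Hsym (v i)).
  apply regular_dist_sandwich; [apply Hu | exact Hw |].
  apply (iter_orbit_le g w Hg Hw 1); lia. }
pose proof (le_0_of_dominated_by_null _ _ _ Hbound (CV_shift' _ 1 _ Hcv)).
symmetry; apply Hd0; pose proof (Hpos w (g w)); lra.
Qed.

End RegularBMetric.

Section ConcordantFamily.

Variables (X I : Type) (le : X -> X -> Prop) (f : I -> X -> X).
Hypothesis Hiso : concordantly_isotone le f.

Lemma concordantly_isotone_monotone (a : I) (x y : X) :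
  (forall x, le x x) -> le x y -> le (f a x) (f a y).
Proof.
intros Hrefl Hxy.
destruct (classic (x = y)) as [<- | Hne]; [apply Hrefl | exact (Hiso x y (conj Hxy Hne) a a)].
Qed.

Lemma concordantly_isotone_image_le (x : X) :
  (forall b, le x (f b x)) -> forall a b, le (f a x) (f b (f a x)).
Proof.
intros Hx a b.
destruct (classic (x = f a x)) as [E | Hne]; [rewrite <- E; apply Hx |].
exact (Hiso _ _ (conj (Hx a) Hne) a b).
Qed.

Lemma Cstar1_at_singleton_image (x0 : X) (a0 : I) :
  (forall x, le x x) -> (forall a, le x0 (f a x0)) ->
  Cstar1_at le f x0 (fun x => x = f a0 x0).
Proof.
intros Hrefl Hx0.
split; [split; [| split; [| split]] |].
- intros x y -> ->; left; apply Hrefl.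
- intros x ->; exists a0, x0; reflexivity.
- intros x a ->; apply concordantly_isotone_image_le; exact Hx0.
- intros x y -> -> [_ Hne]; contradiction.
- intros x ->; split; [apply Hx0 |].
  exists a0, x0; split; [apply Hrefl | reflexivity].
Qed.

Lemma Cstar1_at_ComFix_chain (x0 : X) (a0 : I) (A : X -> Prop) :
  (forall x, le x x) -> is_chain le A ->
  (forall x, A x -> ComFix f x /\ Ostar le x0 x) -> Cstar1_at le f x0 A.
Proof.
intros Hrefl Hchain HA.
assert (Hfix : forall x a, A x -> f a x = x) by (intros x a Ax; apply (HA x Ax)).
split; [split; [exact Hchain | split; [| split]] |].
- intros x Ax; exists a0, x; symmetry; apply Hfix, Ax.
- intros x a Ax; rewrite (Hfix x a Ax); apply Hrefl.
- intros x y Ax _ [Hxy _] a; rewrite (Hfix x a Ax); exact Hxy.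
- intros x Ax; split; [apply HA, Ax |].
  exists a0, x; split; [apply HA, Ax | symmetry; apply Hfix, Ax].
Qed.

End ConcordantFamily.

Lemma ComFix_of_squeezed_orbits (X I : Type) (d : X -> X -> R) (s : R)
    (le : X -> X -> Prop) (f : I -> X -> X) (w z : X) (b : I) :
  preordered_s_regular_b_metric d s le -> concordantly_isotone le f ->
  (forall a (i : nat), le w (f a w) /\ le (Nat.iter i (f b) z) w) ->
  (forall a, Un_cv (fun i : nat => d (Nat.iter i (f a) w) (Nat.iter i (f b) z)) 0) ->
  ComFix f w.
Proof.
intros Hsp Hiso Hw Hcv a.
pose proof Hsp as [_ [[Hrefl _] _]].
apply (fixpoint_of_squeezed_orbit X d s le Hsp (f a) w (fun i => Nat.iter i (f b) z)).
- intros x y; apply concordantly_isotone_monotone; assumption.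
- exact (proj1 (Hw a 0%nat)).
- intros i; exact (proj2 (Hw a i)).
- apply Hcv.
Qed.

Theorem theorem3p2 (X I : Type) (d : X -> X -> R) (s : R)
    (le : X -> X -> Prop) (x0 : X) (f : I -> X -> X) :
  preordered_s_regular_b_metric d s le ->
  inhabited I ->
  concordantly_isotone le f ->
  (forall a, le x0 (f a x0)) ->
  (forall C : X -> Prop, Cstar1_at le f x0 C ->
     exists w : X, common_upper_bound le f C w /\
       exists (z : X) (b : I),
         (forall a (i : nat), le w (f a w) /\ le (Nat.iter i (f b) z) w) /\
         (forall a, Un_cv (fun i : nat =>
                      d (Nat.iter i (f a) w) (Nat.iter i (f b) z)) 0)) ->
  (exists x, ComFix f x /\ Ostar le x0 x) /\
  (exists w, maximal_in le (fun x => ComFix f x /\ Ostar le x0 x) w).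
Proof.
intros Hsp [a0] Hiso Hx0 Hbound.
pose proof Hsp as [_ [[Hrefl Htrans] _]].
assert (Hfixbound : forall C, Cstar1_at le f x0 C ->
          exists w, common_upper_bound le f C w /\ ComFix f w).
{ intros C HC; destruct (Hbound C HC) as [w [Hub [z [b [Hw Hcv]]]]].
  exists w; split; [exact Hub |].
  exact (ComFix_of_squeezed_orbits X I d s le f w z b Hsp Hiso Hw Hcv). }
destruct (Hfixbound _ (Cstar1_at_singleton_image X I le f Hiso x0 a0 Hrefl Hx0))
  as [w1 [Hub1 Hfix1]].
assert (Hw1 : ComFix f w1 /\ Ostar le x0 w1).
{ split; [exact Hfix1 |].
  apply (Htrans _ (f a0 x0)); [apply Hx0 |].
  apply (Htrans _ (f a0 (f a0 x0))); [apply concordantly_isotone_image_le; assumption |].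
  apply Hub1; reflexivity. }
split; [exists w1; exact Hw1 |].
apply (zorn_maximal_in X le _ w1 (proj1 (proj2 Hsp)) (regular_antisym X d s le Hsp) Hw1).
intros A [x1 Ax1] HA Hchain.
destruct (Hfixbound A (Cstar1_at_ComFix_chain X I le f x0 a0 A Hrefl Hchain HA))
  as [w [Hub Hfix]].
assert (Hle : forall x, A x -> le x w).
{ intros x Ax; rewrite <- (proj1 (HA x Ax) a0); apply Hub, Ax. }
exists w; split; [split; [exact Hfix |] | exact Hle].
exact (Htrans _ _ _ (proj2 (HA x1 Ax1)) (Hle x1 Ax1)).
Qed.
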